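(* If $H$ is a corona graph, then its 2-subdivision graph $S_2(H)$ (for any function $\alpha$) is a minimal DPDP-graph. In particular, $S_2(F\circ K_1)$ is a minimal DPDP-graph for every graph $F$.
   Context: Graphs are finite and may have multiple edges and loops. A leaf is a vertex of degree one. The corona $F\circ K_1$ of a graph $F$ is obtained from $F$ by adding a pendant edge (to a new leaf) at each vertex of $F$. A corona graph is a graph obtained from a graph $F$ by attaching at least one pendant edge to each vertex of $F$. A set $D\subseteq V(G)$ is dominating if every vertex outside $D$ has a neighbor in $D$; $P$ is paired-dominating if it is dominating and the subgraph induced by $P$ has a perfect matching. A DPDP-graph is a graph $G$ admitting disjoint sets $D,P$ with $V(G)=D\cup P$, $D$ dominating and $P$ paired-dominating; a minimal DPDP-graph is a DPDP-graph no proper spanning subgraph of which is a DPDP-graph. 2-subdivision graph: for a graph $H$ with no isolated vertex, set of leaves $L_H$, and $\alpha:L_H\to\mathbb{N}=\{1,2,\dots\}$, $S_2(H)$ has vertex set $(V_H\setminus L_H)\cup\{(v,i): v\in L_H, 1\le i\le \alpha(v)\}$ together with two new vertices for each edge $e$ of $H$ ($u_e,v_e$ if $e$ joins $u\ne v$; $v_e^1,v_e^2$ if $e$ is a loop at $v$). Its edges are: the edge joining the two new vertices of each $e$; for $v\in V_H\setminus L_H$, $vv_e$ for each non-loop edge $e$ at $v$ and $vv_e^1,vv_e^2$ for each loop $e$ at $v$; for $v\in L_H$ with incident edge $e$, the edges $v_e(v,i)$, $1\le i\le\alpha(v)$. *)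

From mathcomp Require Import all_boot.
Set Implicit Arguments. Unset Strict Implicit. Unset Printing Implicit Defensive.

(* A finite multigraph is given by a finite vertex type V, a finite edge type E
   and the (ordered) pair of end vertices of each edge; an edge [e] with
   [ends e = (v, v)] is a loop at [v].  Spanning subgraphs of such a graph are
   given by subsets [F : {set E}] of its edges (all vertices kept). *)

Section Graphs.
Variables (V E : finType) (ends : E -> V * V).

Definition incident (e : E) (v : V) : bool := ((ends e).1 == v) || ((ends e).2 == v).

(* degree: a loop contributes 2 *)
Definition deg (v : V) : nat :=
  #|[set e | (ends e).1 == v]| + #|[set e | (ends e).2 == v]|.

Definition is_leaf (v : V) : bool := deg v == 1.

Definition adjF (F : {set E}) (u v : V) : bool :=
  (u != v) && [exists e in F, (ends e == (u, v)) || (ends e == (v, u))].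

Definition dominatingF (F : {set E}) (D : {set V}) : Prop :=
  forall v, v \notin D -> exists2 u, u \in D & adjF F v u.

Definition has_perfect_matchingF (F : {set E}) (P : {set V}) : Prop :=
  exists M : {set E},
    [/\ M \subset F,
        (forall e, e \in M -> [/\ (ends e).1 \in P, (ends e).2 \in P & (ends e).1 != (ends e).2])
      & (forall v, v \in P -> #|[set e in M | incident e v]| = 1)].

Definition paired_dominatingF (F : {set E}) (P : {set V}) : Prop :=
  dominatingF F P /\ has_perfect_matchingF F P.

Definition DPDPF (F : {set E}) : Prop :=
  exists D P : {set V},
    [/\ [disjoint D & P], D :|: P = setT, dominatingF F D & paired_dominatingF F P].

Definition is_DPDP : Prop := DPDPF setT.

Definition minimal_DPDP : Prop :=
  is_DPDP /\ forall F : {set E}, F \proper setT -> ~ DPDPF F.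

(* H is a corona graph: there is a set C (= V(F)) such that every vertex outside
   C is a leaf whose edge joins it to a vertex of C (a pendant edge attached to
   C), and every vertex of C carries at least one such pendant edge. *)
Definition is_corona : Prop :=
  exists C : {set V},
    (forall v, v \notin C ->
       is_leaf v /\ forall e, incident e v -> ((ends e).1 \in C) || ((ends e).2 \in C))
    /\ (forall c, c \in C -> exists e v, v \notin C /\ (ends e = (c, v) \/ ends e = (v, c))).

End Graphs.

(* The corona F o K_1: a new leaf [inr v] attached to each vertex [inl v]. *)
Section Corona.
Variables (V E : finType) (ends : E -> V * V).
Definition coronaV : finType := (V + V)%type.
Definition coronaE : finType := (E + V)%type.
Definition corona_ends (x : coronaE) : coronaV * coronaV :=
  match x with
  | inl e => (inl (ends e).1, inl (ends e).2)
  | inr v => (inl v, inr v)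
  end.
End Corona.

(* The 2-subdivision graph S_2(H) with multiplicity function alpha
   (only its values on leaves matter; copies (v,i), 1 <= i <= alpha v, are
   indexed by i : 'I_(alpha v), i.e. 0 <= i < alpha v). *)
Section S2.
Variables (V E : finType) (ends : E -> V * V) (alpha : V -> nat).

(* the edge-vertex (e, false) is u_e and (e, true) is v_e, where ends e = (u, v);
   for a loop these are v_e^1, v_e^2 *)
Definition endpt (eb : E * bool) : V := if eb.2 then (ends eb.1).2 else (ends eb.1).1.

Definition S2inner : finType := {v : V | ~~ is_leaf ends v}.
Definition S2copies : finType := {p : {v : V & 'I_(alpha v)} | is_leaf ends (tag p)}.
Definition S2V : finType := (S2inner + S2copies + (E * bool))%type.
Definition S2E : finType :=
  (E + {eb : E * bool | ~~ is_leaf ends (endpt eb)}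
     + {q : (E * bool) * S2copies | tag (val q.2) == endpt q.1})%type.

Definition S2ends (x : S2E) : S2V * S2V :=
  match x with
  | inl (inl e) => (inr (e, false), inr (e, true))
  | inl (inr eb) => (inl (inl (exist _ (endpt (val eb)) (valP eb))), inr (val eb))
  | inr q => (inr (val q).1, inl (inr (val q).2))
  end.
End S2.
Arguments S2ends {V E} ends alpha x.

From mathcomp Require Import all_boot.
Set Implicit Arguments. Unset Strict Implicit. Unset Printing Implicit Defensive.

(* S_2(H) is a DPDP-graph with D the branch vertices (inner vertices and leaf
   copies) and P the subdivision vertices, paired along the edges u_e v_e.
   For minimality, take any DPDP pair (D, P) of a spanning subgraph: every
   vertex then has a neighbour in P, and every vertex of P one in D.  A leaf
   copy has a single neighbour, so it cannot be in P, and its neighbour is.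
   Following the pendant edge that a corona attaches at every inner vertex
   shows that inner vertices are not in P either.  Hence P-neighbours of
   subdivision vertices are their twins, so all subdivision vertices are in P
   and every edge u_e v_e is present; the D-neighbours of the subdivision
   vertices and the P-neighbours of the copies then force all remaining edges. *)

Definition twin (E : Type) (eb : E * bool) : E * bool := (eb.1, ~~ eb.2).

Lemma twinK (E : Type) : involutive (@twin E).
Proof. by case=> e b; rewrite /twin negbK. Qed.

Section Leaves.
Variables (V E : finType) (ends : E -> V * V).

Lemma deg_endpt v : deg ends v = #|[set eb | endpt ends eb == v]|.
Proof.
rewrite /deg -!sum1dep_card [X in X + _]big_mkcond [X in _ + X]big_mkcond.
rewrite [RHS]big_mkcond -big_split /=.
rewrite [RHS](eq_bigr (fun p => if endpt ends (p.1, p.2) == v then 1 else 0)) => [|[] //].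
rewrite -(pair_bigA _ (fun e b => if endpt ends (e, b) == v then 1 else 0)).
by apply: eq_bigr => e _; rewrite big_bool addnC.
Qed.

Lemma leaf_endpt_set v :
  is_leaf ends v -> exists eb, [set eb | endpt ends eb == v] = [set eb].
Proof. by rewrite /is_leaf deg_endpt => /cards1P. Qed.

Lemma leaf_endpt_exists v : is_leaf ends v -> exists eb : E * bool, endpt ends eb = v.
Proof.
case/leaf_endpt_set => eb endpt_v; exists eb; apply/eqP.
by have := set11 eb; rewrite -endpt_v inE.
Qed.

Lemma leaf_endpt_inj v eb1 eb2 :
  is_leaf ends v -> endpt ends eb1 = v -> endpt ends eb2 = v -> eb1 = eb2.
Proof.
case/leaf_endpt_set => eb endpt_v eb1_v eb2_v.
have : eb1 \in [set eb | endpt ends eb == v] by rewrite inE eb1_v.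
have : eb2 \in [set eb | endpt ends eb == v] by rewrite inE eb2_v.
by rewrite endpt_v !inE => /eqP -> /eqP ->.
Qed.

Lemma corona_pendant w :
  is_corona ends -> ~~ is_leaf ends w ->
  exists eb, endpt ends eb = w /\ is_leaf ends (endpt ends (twin eb)).
Proof.
case=> C [notC_leaf C_pendant] w_inner.
have /C_pendant [e [v [vC [] ends_e]]] : w \in C.
  by apply/negPn/negP => /notC_leaf [w_leaf _]; rewrite w_leaf in w_inner.
- by exists (e, false); rewrite /endpt ends_e; split => //; exact: (notC_leaf v vC).1.
- by exists (e, true); rewrite /endpt ends_e; split => //; exact: (notC_leaf v vC).1.
Qed.
End Leaves.

Section Adjacency.
Variables (V E : finType) (ends : E -> V * V).

Lemma adjF_sym (F : {set E}) u v : adjF ends F u v = adjF ends F v u.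
Proof.
rewrite /adjF eq_sym; congr (_ && _).
by apply: eq_existsb => e; rewrite orbC.
Qed.

Lemma adjF_ends (F : {set E}) e :
  e \in F -> (ends e).1 != (ends e).2 -> adjF ends F (ends e).1 (ends e).2.
Proof.
move=> eF neq; rewrite /adjF neq; apply/existsP.
by exists e; rewrite eF -surjective_pairing eqxx.
Qed.

Lemma adjF_edge (F : {set E}) u v :
  adjF ends F u v -> exists2 e, e \in F & ends e = (u, v) \/ ends e = (v, u).
Proof.
by case/andP=> _ /existsP [e /andP [eF /orP [] /eqP]]; exists e => //; [left|right].
Qed.

Section DominatingPair.
Variables (F : {set E}) (D P : {set V}).

Lemma paired_dominating_total x :
  paired_dominatingF ends F P -> exists2 y, y \in P & adjF ends F x y.
Proof.
case=> P_dom [M [MF M_in_P M_perfect]].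
have [xP|/P_dom //] := boolP (x \in P).
have /card_gt0P [m] : 0 < #|[set m in M | incident ends m x]| by rewrite M_perfect.
rewrite inE => /andP [mM x_m]; have [m1P m2P m12] := M_in_P m mM.
have m_adj := adjF_ends (subsetP MF m mM) m12.
by case/orP: x_m => /eqP <-; [exists (ends m).2 | exists (ends m).1; rewrite // adjF_sym].
Qed.

Lemma dominating_disjoint_neighbor x :
  [disjoint D & P] -> dominatingF ends F D -> x \in P -> exists2 y, y \in D & adjF ends F x y.
Proof. by move=> DP D_dom xP; apply: D_dom; apply/negP => /(disjointFr DP); rewrite xP. Qed.
End DominatingPair.
End Adjacency.

Section S2Graph.
Variables (V E : finType) (ends : E -> V * V) (alpha : V -> nat).

Local Notation G := (S2ends ends alpha).
Local Notation S2V := (S2V ends alpha).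
Local Notation S2E := (S2E ends alpha).
Local Notation inner_edge := {eb : E * bool | ~~ is_leaf ends (endpt ends eb)}.
Local Notation copy_edge :=
  {q : (E * bool) * S2copies ends alpha | tag (val q.2) == endpt ends q.1}.

Definition S2_inner (eb : inner_edge) : S2V :=
  inl (inl (exist (fun v => ~~ is_leaf ends v) (endpt ends (val eb)) (valP eb))).

Lemma copy_edge_endpt (q : copy_edge) : endpt ends (val q).1 = tag (val (val q).2).
Proof. exact/esym/eqP/(valP q). Qed.

Lemma copy_edge_inj (q1 q2 : copy_edge) : (val q1).2 = (val q2).2 -> q1 = q2.
Proof.
move=> q12; apply: val_inj; rewrite [val q1]surjective_pairing [val q2]surjective_pairing q12.
congr pair; apply: (leaf_endpt_inj (valP (val q2).2)); by rewrite copy_edge_endpt ?q12.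
Qed.

Lemma S2_copy_neighbor (F : {set S2E}) c y : adjF G F (inl (inr c)) y ->
  exists q : copy_edge, [/\ inr q \in F, (val q).2 = c & y = inr (val q).1].
Proof. by case/adjF_edge => -[[e|eb]|q] zF [] // [<- <-]; exists q. Qed.

Lemma S2_subdiv_neighbor (F : {set S2E}) eb y : adjF G F (inr eb) y ->
  [\/ y = inr (twin eb) /\ inl (inl eb.1) \in F,
      exists2 eb' : inner_edge, val eb' = eb & y = S2_inner eb' /\ inl (inr eb') \in F
    | exists2 q : copy_edge, (val q).1 = eb & y = inl (inr (val q).2)].
Proof.
case/adjF_edge => -[[e|eb']|q] zF [] // [<- <-].
- by constructor 1.
- by constructor 1.
- by constructor 2; exists eb'.
- by constructor 3; exists q.
Qed.

Hypothesis alpha_leaf : forall v, is_leaf ends v -> 0 < alpha v.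
Hypothesis ends_corona : is_corona ends.

Definition first_copy v (v_leaf : is_leaf ends v) : S2copies ends alpha :=
  exist _ (Tagged (fun v => 'I_(alpha v)) (Ordinal (alpha_leaf v_leaf))) v_leaf.

Section DPDPPartition.
Variables (F : {set S2E}) (D P : {set S2V}).
Hypotheses (DP_disjoint : [disjoint D & P]) (D_dom : dominatingF G F D)
  (P_pdom : paired_dominatingF G F P).

Let not_in_D_and_P x : x \in D -> x \in P -> False.
Proof. by move/(disjointFr DP_disjoint) => ->. Qed.

Lemma S2_copy_notin_P c : inl (inr c) \notin P.
Proof.
apply/negP => cP.
have [y1 y1P /S2_copy_neighbor [q1 [_ q1c y1E]]] :=
  paired_dominating_total (inl (inr c)) P_pdom.
have [y2 y2D /S2_copy_neighbor [q2 [_ q2c y2E]]] :=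
  dominating_disjoint_neighbor DP_disjoint D_dom cP.
by apply: (not_in_D_and_P y2D); rewrite y2E (copy_edge_inj (etrans q2c (esym q1c))) -y1E.
Qed.

Lemma S2_leaf_subdiv_in_P eb : is_leaf ends (endpt ends eb) -> inr eb \in P.
Proof.
move=> eb_leaf.
have [y yP /S2_copy_neighbor [q [_ qc yE]]] :=
  paired_dominating_total (inl (inr (first_copy eb_leaf))) P_pdom.
have qeb : (val q).1 = eb by apply: (leaf_endpt_inj eb_leaf); rewrite // copy_edge_endpt qc.
by rewrite -qeb -yE.
Qed.

Lemma S2_leaf_twin_in_P eb : is_leaf ends (endpt ends eb) -> inr (twin eb) \in P.
Proof.
move=> eb_leaf.
have [y yP /S2_subdiv_neighbor [[yE _] | [eb' eb'E _] | [q _ yE]]] :=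
  paired_dominating_total (inr eb) P_pdom.
- by rewrite -yE.
- by move: (valP eb'); rewrite eb'E eb_leaf.
- by move: yP; rewrite yE (negbTE (S2_copy_notin_P _)).
Qed.

Lemma S2_subdiv_D_neighbor (eb : inner_edge) y :
  inr (twin (val eb)) \in P -> y \in D -> adjF G F (inr (val eb)) y ->
  y = S2_inner eb /\ inl (inr eb) \in F.
Proof.
move=> twinP yD /S2_subdiv_neighbor [[yE _] | [eb' /val_inj <-] // | [q qeb yE]].
- by case: (not_in_D_and_P yD); rewrite yE.
- move: (valP (val q).2); rewrite -copy_edge_endpt qeb.
  by rewrite (negbTE (valP eb)).
Qed.

Lemma S2_inner_notin_P (eb0 : inner_edge) : S2_inner eb0 \notin P.
Proof.
have [eb [ebw twin_leaf]] := corona_pendant ends_corona (valP eb0).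
have eb_inner : ~~ is_leaf ends (endpt ends eb) by rewrite ebw; exact: valP eb0.
have -> : S2_inner eb0 = S2_inner (exist _ eb eb_inner) by do 2 congr inl; exact: val_inj.
have twinP : inr (twin eb) \in P := S2_leaf_subdiv_in_P twin_leaf.
have ebP : inr eb \in P by rewrite -[eb]twinK S2_leaf_twin_in_P.
have [y yD] := dominating_disjoint_neighbor DP_disjoint D_dom ebP.
case/(S2_subdiv_D_neighbor (eb := exist _ eb eb_inner) twinP yD) => <- _.
by apply/negP; apply: not_in_D_and_P.
Qed.

Lemma S2_subdiv_P_neighbor eb y :
  y \in P -> adjF G F (inr eb) y -> y = inr (twin eb) /\ inl (inl eb.1) \in F.
Proof.
move=> yP /S2_subdiv_neighbor [// | [eb' _ [yE _]] | [q _ yE]]; move: yP; rewrite yE.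
- by rewrite (negbTE (S2_inner_notin_P _)).
- by rewrite (negbTE (S2_copy_notin_P _)).
Qed.

Lemma S2_subdiv_in_P eb : inr eb \in P.
Proof.
have [y yP /(S2_subdiv_P_neighbor yP) [yE _]] :=
  paired_dominating_total (inr (twin eb)) P_pdom.
by rewrite -[eb]twinK -yE.
Qed.

Lemma S2_twin_edge_in_F e : inl (inl e) \in F.
Proof.
have [y yP /(S2_subdiv_P_neighbor yP) [_ //]] :=
  paired_dominating_total (inr (e, false)) P_pdom.
Qed.

Lemma S2_inner_edge_in_F (eb : inner_edge) : inl (inr eb) \in F.
Proof.
have [y yD /(S2_subdiv_D_neighbor (S2_subdiv_in_P _) yD) [_ //]] :=
  dominating_disjoint_neighbor DP_disjoint D_dom (S2_subdiv_in_P (val eb)).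
Qed.

Lemma S2_copy_edge_in_F (q : copy_edge) : inr q \in F.
Proof.
have [y _ /S2_copy_neighbor [q' [q'F q'q _]]] :=
  paired_dominating_total (inl (inr (val q).2)) P_pdom.
by rewrite -(copy_edge_inj q'q).
Qed.
End DPDPPartition.

Lemma S2_DPDPF_full (F : {set S2E}) : DPDPF G F -> F = setT.
Proof.
case=> D [P [DP _ D_dom P_pdom]].
apply/eqP; rewrite eqEsubset subsetT; apply/subsetP => -[[e|eb]|q] _.
- exact (S2_twin_edge_in_F DP D_dom P_pdom e).
- exact (S2_inner_edge_in_F DP D_dom P_pdom eb).
- exact (S2_copy_edge_in_F P_pdom q).
Qed.

Definition is_subdiv (x : S2V) : bool := if x is inr _ then true else false.
Definition is_twin_edge (z : S2E) : bool := if z is inl (inl _) then true else false.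

Lemma S2_adj_inner eb (eb_inner : ~~ is_leaf ends (endpt ends eb)) :
  adjF G setT (inr eb) (S2_inner (exist _ eb eb_inner)).
Proof.
by rewrite adjF_sym; exact: (adjF_ends (in_setT (inl (inr (exist _ eb eb_inner)) : S2E))).
Qed.

Lemma S2_adj_copy eb c (c_eb : tag (val c) == endpt ends eb) :
  adjF G setT (inr eb) (inl (inr c)).
Proof. exact: (adjF_ends (in_setT (inr (exist _ (eb, c) c_eb : copy_edge) : S2E))). Qed.

Lemma S2_subdiv_branch_neighbor eb : exists2 y, ~~ is_subdiv y & adjF G setT (inr eb) y.
Proof.
have [eb_leaf | eb_inner] := boolP (is_leaf ends (endpt ends eb)).
- by exists (inl (inr (first_copy eb_leaf))); last exact: S2_adj_copy.
- by exists (S2_inner (exist _ eb eb_inner)); last exact: S2_adj_inner.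
Qed.

Lemma S2_branch_subdiv_neighbor x : ~~ is_subdiv x -> exists2 y, is_subdiv y & adjF G setT x y.
Proof.
case: x => [[[w w_inner]|c]|//] _.
- have [eb [ebw _]] := corona_pendant ends_corona w_inner.
  have eb_inner : ~~ is_leaf ends (endpt ends eb) by rewrite ebw.
  have -> : inl (inl (exist _ w w_inner)) = S2_inner (exist _ eb eb_inner).
    by do 2 congr inl; exact: val_inj.
  by exists (inr eb); rewrite // adjF_sym; exact: S2_adj_inner.
- have [eb ebc] := leaf_endpt_exists (valP c).
  have c_eb : tag (val c) == endpt ends eb by rewrite ebc.
  by exists (inr eb); rewrite // adjF_sym; exact: S2_adj_copy c_eb.
Qed.

Lemma S2_twin_matching : has_perfect_matchingF G setT [set x | is_subdiv x].
Proof.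
exists [set z | is_twin_edge z]; split; first exact: subsetT.
  by case=> [[e|eb]|q]; rewrite !inE // => _; split => //; apply/eqP; case.
case=> [[i|c]|[e b]]; rewrite inE // => _.
rewrite (_ : [set _ in _ | _] = [set inl (inl e)]) ?cards1 //.
apply/setP => -[[e'|eb]|q]; rewrite !inE //= /incident /=.
rewrite !(inj_eq inr_inj) !(inj_eq inl_inj) !xpair_eqE.
by case: b; case: (e' == e).
Qed.

Lemma S2_is_DPDP : is_DPDP G.
Proof.
exists [set x | ~~ is_subdiv x], [set x | is_subdiv x]; split.
- by rewrite -setI_eq0; apply/eqP/setP => x; rewrite !inE andNb.
- by apply/setP => x; rewrite !inE orNb.
- case=> [x|eb]; rewrite inE negbK // => _.
  by have [y] := S2_subdiv_branch_neighbor eb; exists y; rewrite ?inE.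
split; last exact: S2_twin_matching.
by move=> x; rewrite inE => /S2_branch_subdiv_neighbor [y]; exists y; rewrite ?inE.
Qed.

Lemma S2_minimal_DPDP : minimal_DPDP G.
Proof.
split=> [|F /properP [_ [z _ zF]] /S2_DPDPF_full F_full]; first exact: S2_is_DPDP.
by rewrite F_full in_setT in zF.
Qed.
End S2Graph.

Lemma corona_ends_is_corona (V E : finType) (ends : E -> V * V) : is_corona (corona_ends ends).
Proof.
exists [set x : coronaV V | if x is inl _ then true else false]; split.
- case=> [y|y]; rewrite inE // => _; split.
  + rewrite /is_leaf /deg.
    rewrite (_ : [set e | _ == inr y] = set0); last by apply/setP; case=> [e|y']; rewrite !inE.
    rewrite (_ : [set e | (corona_ends ends e).2 == inr y] = [set inr y]) ?cards0 ?cards1 //.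
    by apply/setP; case=> [e|y']; rewrite !inE.
  + by case=> [e|y'] _; rewrite /= inE.
- case=> [y|y]; rewrite inE // => _.
  by exists (inr y), (inr y); split; [rewrite inE | left].
Qed.

Theorem corollary6p3 :
  (forall (V E : finType) (ends : E -> V * V) (alpha : V -> nat),
      is_corona ends ->
      (forall v, is_leaf ends v -> 0 < alpha v) ->
      minimal_DPDP (S2ends ends alpha))
  /\
  (forall (V E : finType) (ends : E -> V * V) (alpha : coronaV V -> nat),
      (forall v, is_leaf (corona_ends ends) v -> 0 < alpha v) ->
      minimal_DPDP (S2ends (corona_ends ends) alpha)).
Proof.
split=> [V E ends alpha ends_corona alpha_leaf | V E ends alpha alpha_leaf].
- exact: S2_minimal_DPDP.
- exact/S2_minimal_DPDP/corona_ends_is_corona.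
Qed.
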